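(* Let $G$ be a finite loopless multigraph, let $\vec G$ be an orientation of $G$, let $a$ be a positive integer and let $\mathfrak f$ be a fraternal completion of $\vec G$ of depth $a$. Let $c:E(\vec G)\to[N]$ be a colouring of the edges such that $c(e_1)\ne c(e_2)$ for every conflict $(e_1,e_2)$ with $e_1\ne e_2$. Then every cycle $\gamma$ of $G$ receives at least $\min(|\gamma|,a+1)$ distinct colours.
   Context: Let $\vec G$ be a finite loopless directed multigraph and $a$ a positive integer. A fraternal completion of $\vec G$ of depth $a$ is a triple $\mathfrak f=((E_1,\dots,E_a),w,\kappa)$ such that: $E_1=E(\vec G)$; for $2\le i\le a$, $E_i$ is the arc set of a directed multigraph with vertex set $V(\vec G)$; the sets $E_1,\dots,E_a$ are pairwise disjoint (distinct arcs may have the same head and tail); writing $E_{\mathfrak f}=\bigcup_{1\le i\le a}E_i$, the weight $w(e)$ of $e\in E_{\mathfrak f}$ is the $i$ with $e\in E_i$; $\kappa$ maps each $e\in\bigcup_{1<i\le a}E_i$ to a pair $(f,g)\in E_{\mathfrak f}^2$ with ${\rm tail}(f)\ne{\rm tail}(g)$, $w(e)=w(f)+w(g)$, ${\rm tail}(e)={\rm tail}(f)$, ${\rm head}(e)={\rm tail}(g)$, ${\rm head}(f)={\rm head}(g)$; and conversely, for all $i,j$ with $i+j\le a$ and all $f\in E_i$, $g\in E_j$ with ${\rm tail}(f)\ne{\rm tail}(g)$ and ${\rm head}(f)={\rm head}(g)$, there is a unique $e\in E_{i+j}$ with $\kappa(e)\in\{(f,g),(g,f)\}$. Let $\prec$ be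 the partial order on $E_{\mathfrak f}$ obtained as the transitive closure of the relations $f\prec e$ and $g\prec e$ whenever $\kappa(e)=(f,g)$; $f\preceq e$ means $f\prec e$ or $f=e$. Let $\vec H_{\le a}$ be the directed multigraph with vertex set $V(\vec G)$ and arc set $E_{\mathfrak f}$. A pair $(e_1,e_2)$ of arcs of $\vec G$ is a conflict if there exist $f_1,f_2\in E_{\mathfrak f}$ with $f_1\succeq e_1$, $f_2\succeq e_2$, and a directed path of length at most $a$ in $\vec H_{\le a}$ whose first arc is $f_1$ and which ends at an endpoint of $f_2$ (possibly $f_1=f_2$). Cycles of $G$ include $2$-cycles formed by parallel edges; $|\gamma|$ is the number of edges of $\gamma$. *)

From mathcomp Require Import all_boot.

(* A finite loopless directed multigraph  ~G  is given by a finite vertex type V,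
   a finite arc type E and tail/head maps tl hd : E -> V (looplessness is a
   hypothesis tl e != hd e).  The underlying undirected multigraph G has the same
   edges, an edge e joining tl e and hd e.

   A fraternal completion of depth a is encoded by a finite type X of the new
   arcs (the union of E_2, ..., E_a), with tail/head maps tlX hdX, weights wX and
   the map kap (kappa).  The full arc set E_f is the disjoint sum E + X; the arcs
   of E (= E_1) have weight 1.  *)

Section Fraternal.
Variables (V E X : finType) (tl hd : E -> V) (tlX hdX : X -> V)
          (wX : X -> nat) (kap : X -> ((E + X) * (E + X))%type).

Definition Arc : finType := (E + X)%type.

Definition tailA (f : Arc) : V := match f with inl e => tl e | inr x => tlX x end.
Definition headA (f : Arc) : V := match f with inl e => hd e | inr x => hdX x end.
Definition wA (f : Arc) : nat := match f with inl _ => 1 | inr x => wX x end.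

Definition is_fraternal_completion (a : nat) : Prop :=
  (forall x : X, 2 <= wX x <= a) /\
  (forall x : X,
     let f := (kap x).1 in let g := (kap x).2 in
     [/\ tailA f != tailA g, wX x = wA f + wA g, tlX x = tailA f,
         hdX x = tailA g & headA f = headA g]) /\
  (forall f g : Arc, wA f + wA g <= a -> tailA f != tailA g ->
     headA f = headA g ->
     exists! x : X, kap x = (f, g) \/ kap x = (g, f)).

Definition childrel : rel Arc :=
  fun c p => match p with
             | inl _ => false
             | inr x => (c == (kap x).1) || (c == (kap x).2)
             end.

Definition preceq (f e : Arc) : bool := connect childrel f e.

Definition arc_adj : rel Arc := fun f g => headA f == tailA g.

(* f1 :: s is a directed path (distinct vertices) in H_{<=a} of length at most a,
   starting with the arc f1, ending at vertex v *)
Definition dpath_from_to (a : nat) (f1 : Arc) (s : seq Arc) (v : V) : Prop :=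
  [/\ path arc_adj f1 s,
      uniq (tailA f1 :: headA f1 :: map headA s),
      size (f1 :: s) <= a &
      last (headA f1) (map headA s) = v].

Definition conflict (a : nat) (e1 e2 : E) : Prop :=
  exists (f1 f2 : Arc) (s : seq Arc),
    [/\ preceq (inl e1) f1, preceq (inl e2) f2 &
        (dpath_from_to a f1 s (tailA f2) \/ dpath_from_to a f1 s (headA f2))].

End Fraternal.

Section Cycles.
Variables (V E : finType) (tl hd : E -> V).

Definition joins (e : E) (u v : V) : bool :=
  ((tl e == u) && (hd e == v)) || ((tl e == v) && (hd e == u)).

(* vs = [v_0; ...; v_{k-1}], es = [e_0; ...; e_{k-1}], k >= 2, all distinct,
   e_i joins v_i and v_{i+1 mod k}.  (k = 2: two distinct parallel edges.) *)
Definition is_cycle (vs : seq V) (es : seq E) : Prop :=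
  [/\ 2 <= size es, size vs = size es, uniq vs, uniq es &
      all (fun t => joins t.1 t.2.1 t.2.2) (zip es (zip vs (rot 1 vs)))].

End Cycles.

From Pilot Require Import Defs.
Set Warnings "-notation-overridden".
From mathcomp Require Import all_boot zify.

(* It suffices to find min(|gamma|, a+1)
   distinct edges of the cycle gamma that pairwise conflict (in some order):
   a colouring separating conflicts is injective on them.

   The cycle is covered by a cyclic sequence of "bundles" (g_i, S_i, u_i, u_i+1):
   g_i is an arc of H_{<=a} joining the distinct vertices u_i and u_i+1 in one
   direction or the other, S_i consists of w(g_i) edges of gamma lying below
   g_i, and the S_i partition the edges of gamma.  Initially every edge of
   gamma is a bundle by itself.
   - If all arcs point forward (or all backward) they form a directed cycle,
     and any two of the first a+1 edges lie in bundles i <= j with j - i <= a,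
     joined by the directed path g_i ... g_j-1 ending at the tail of g_j.
   - Otherwise a forward arc g_i is followed by a backward arc g_i+1; both end
     at u_i+1, so the edges of S_i and S_i+1 pairwise conflict.  Either these
     are already enough edges, or kappa provides an arc joining u_i and u_i+2
     that merges the two bundles into one.
   Induction on the number of bundles concludes. *)

Lemma rot_true_false (s : seq bool) : true \in s -> false \in s ->
  exists n q, rot n s = [:: true, false & q].
Proof.
move=> /splitPr [s1 s2] Hfalse.
have Ht : false \in s2 ++ s1.
  by move: Hfalse; rewrite !mem_cat inE /=; case/orP=> ->; rewrite ?orbT.
have [p [q Hpq]] : exists p q, true :: (s2 ++ s1) = p ++ [:: true, false & q].
  elim: (s2 ++ s1) Ht => [//|[] t IH] /=; last by exists [::], t.
  by move=> /IH [p [q ->]]; exists (true :: p), q.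
exists (rot_add (s1 ++ true :: s2) (size s1) (size p)), (q ++ p).
by rewrite -rot_rot_add rot_size_cat cat_cons Hpq rot_size_cat.
Qed.

Lemma mem_take_flatten {T : eqType} {ss : seq (seq T)} {m : nat} {x : T} :
  all (fun s => 0 < size s) ss -> x \in take m (flatten ss) ->
  exists j, [/\ j < m, j < size ss & x \in nth [::] ss j].
Proof.
elim: ss m => [//|s ss IH] m /= /andP [Hs Hss]; rewrite take_cat.
case: ltnP => Hm.
  move=> Hx; exists 0; split=> //; last exact: mem_take Hx.
  by case: m Hm Hx => [|m]; rewrite ?take0.
rewrite mem_cat => /orP [Hx|Hx]; first by exists 0; split=> //; lia.
have [j [Hj1 Hj2 Hj3]] := IH _ Hss Hx.
by exists j.+1; split=> //; lia.
Qed.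

Section ConflictCliques.
Variables (V E X : finType) (tl hd : E -> V) (tlX hdX : X -> V) (wX : X -> nat)
  (kap : X -> ((E + X) * (E + X))%type) (a : nat).

Local Notation Arc := (Defs.Arc E X).
Local Notation tA := (tailA V E X tl tlX).
Local Notation hA := (headA V E X hd hdX).
Local Notation wt := (wA E X wX).
Local Notation prec := (preceq E X kap).
Local Notation adj := (arc_adj V E X tl hd tlX hdX).
Local Notation dpath := (dpath_from_to V E X tl hd tlX hdX a).
Local Notation conflict := (conflict V E X tl hd tlX hdX kap a).

Hypothesis a_gt0 : 0 < a.
Hypothesis loopless : forall e : E, tl e != hd e.
Hypothesis wX_gt0 : forall x : X, 0 < wX x.
Hypothesis kap_spec : forall x : X,
  [/\ tA (kap x).1 != tA (kap x).2, wX x = wt (kap x).1 + wt (kap x).2,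
      tlX x = tA (kap x).1, hdX x = tA (kap x).2 & hA (kap x).1 = hA (kap x).2].
Hypothesis kap_onto : forall f g : Arc, wt f + wt g <= a -> tA f != tA g ->
  hA f = hA g -> exists! x : X, kap x = (f, g) \/ kap x = (g, f).

(* Two edges are linked when they conflict in one order or the other; a
   proper colouring of conflicts is injective on every set of linked edges. *)
Definition linked (e e' : E) : Prop := conflict e e' \/ conflict e' e.

(* No arc of the completion is a loop: new arcs join the distinct tails of
   their two children. *)
Lemma arc_nonloop (f : Arc) : tA f != hA f.
Proof. by case: f => [e|x] /=; [exact: loopless | have [+ _ ->->] := kap_spec x]. Qed.

Lemma wt_gt0 (f : Arc) : 0 < wt f.
Proof. by case: f => //= x; exact: wX_gt0. Qed.

(* Edges lying below two arcs with a common head conflict: the one-arc path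
   consisting of the first arc ends at the head of the second. *)
Lemma conflict_common_head {e1 e2 : E} {f1 f2 : Arc} :
  prec (inl e1) f1 -> prec (inl e2) f2 -> hA f1 = hA f2 -> conflict e1 e2.
Proof.
move=> P1 P2 Hhead; exists f1, f2, [::]; split=> //; right.
by rewrite -Hhead; split=> //=; rewrite ?inE ?arc_nonloop.
Qed.

Lemma common_head_linked {L : seq E} {v : V} :
  (forall e, e \in L -> exists2 f, prec (inl e) f & hA f = v) ->
  {in L &, forall e e', linked e e'}.
Proof.
move=> HL e e' /HL [f Pf Hf] /HL [f' Pf' Hf']; left.
by apply: (conflict_common_head Pf Pf'); rewrite Hf Hf'.
Qed.

Lemma walk_vertices {g0 : Arc} {gs : seq Arc} {j : nat} : path adj g0 gs -> j < size gs ->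
  tA g0 :: hA g0 :: map hA (take j gs) = take j.+2 (map tA (g0 :: gs)) /\
  last (hA g0) (map hA (take j gs)) = tA (nth g0 gs j).
Proof.
elim: gs g0 j => [//|g1 gs IH] g0 [|j] /= /andP [/eqP H01 Hwalk] Hj.
  by rewrite take0 /= H01.
have [Hvs Hlast] := IH g1 j Hwalk Hj.
by rewrite Hlast (set_nth_default g1 g0 Hj) H01 Hvs.
Qed.

Lemma walk_dpath (g0 : Arc) (gs : seq Arc) i j : path adj g0 gs ->
  uniq (map tA (g0 :: gs)) -> i < j <= size gs -> j - i <= a ->
  exists s, dpath (nth g0 (g0 :: gs) i) s (tA (nth g0 (g0 :: gs) j)).
Proof.
elim: i g0 gs j => [|i IH] g0 gs j Hwalk Huniq.
  case: j => [//|j] /andP [_ Hj] Hlen; exists (take j gs).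
  have [Hvs Hlast] := walk_vertices Hwalk Hj.
  split=> //.
  - by move: Hwalk; rewrite -{1}(cat_take_drop j gs) cat_path => /andP [].
  - by rewrite Hvs take_uniq.
  - by rewrite /= size_takel ?(ltnW Hj) // subn0 in Hlen *.
case: gs Hwalk Huniq => [|g1 gs]; first by case: j => [|j] _ _ /andP [].
move=> /= /andP [_ Hwalk] /andP [_ Huniq]; case: j => [//|j] Hij Hlen.
have [s Hs] := IH g1 gs j Hwalk Huniq Hij Hlen.
have Hj : j < size (g1 :: gs) by case/andP: Hij.
have Hi : i < size (g1 :: gs) by case/andP: Hij => /ltnW /leq_trans; apply.
by exists s; rewrite /= (set_nth_default g1 g0 Hi) (set_nth_default g1 g0 Hj).
Qed.

Lemma walk_of_heads {g0 : Arc} {gs : seq Arc} {z : V} :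
  map hA (g0 :: gs) = rcons (map tA gs) z -> path adj g0 gs.
Proof.
elim: gs g0 => [//|g1 gs IH] g0 /= [H01 Hrest].
by rewrite /arc_adj H01 eqxx /=; apply: IH; rewrite /= Hrest.
Qed.

(* A bundle (g, S, u, v): the arc g of the completion joins u and v, in the
   forward direction (u -> v) or the backward one, and S is a list of w(g)
   edges of G lying below g. *)
Definition bundle : Type := (Arc * seq E * V * V)%type.
Definition barc (b : bundle) : Arc := b.1.1.1.
Definition bedges (b : bundle) : seq E := b.1.1.2.
Definition bstart (b : bundle) : V := b.1.2.
Definition bend (b : bundle) : V := b.2.

Definition forward (b : bundle) : bool :=
  (tA (barc b) == bstart b) && (hA (barc b) == bend b).
Definition backward (b : bundle) : bool :=
  (tA (barc b) == bend b) && (hA (barc b) == bstart b).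

Definition bundle_ok (b : bundle) : bool :=
  [&& forward b || backward b, wt (barc b) == size (bedges b)
    & all (fun e => prec (inl e) (barc b)) (bedges b)].

Lemma bundle_okP {b : bundle} : bundle_ok b ->
  0 < size (bedges b) /\ {in bedges b, forall e, prec (inl e) (barc b)}.
Proof. by case/and3P=> _ /eqP <- /allP Hprec; rewrite wt_gt0. Qed.

Lemma bundle_ok_backward {b : bundle} : bundle_ok b -> ~~ forward b -> backward b.
Proof. by case/and3P=> /orP [->|]. Qed.

(* Bundles whose arcs form a directed closed walk with distinct tails: any two
   of the first a+1 edges (in the order of the walk) lie in bundles i <= j with
   j - i <= a, joined by a directed path of length j - i, hence are linked. *)
Lemma directed_cycle_linked (rep : seq bundle) :
  map hA (map barc rep) = rot 1 (map tA (map barc rep)) ->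
  uniq (map tA (map barc rep)) -> all bundle_ok rep ->
  {in take a.+1 (flatten (map bedges rep)) &, forall e e', linked e e'}.
Proof.
case: rep => [|b0 rep] Hcycle Huniq /allP Hok e e'; first by [].
set g0 := barc b0; set gs := map barc rep.
have Hwalk : path adj g0 gs.
  by apply: (walk_of_heads (z := tA g0)); rewrite Hcycle /= rot1_cons.
have Hbelow i f : i < size (b0 :: rep) -> f \in nth [::] (map bedges (b0 :: rep)) i ->
    prec (inl f) (nth g0 (g0 :: gs) i).
  move=> Hi; rewrite (nth_map b0) // -/(map barc (b0 :: rep)) (nth_map b0) //.
  by have [_] := bundle_okP (Hok _ (mem_nth b0 Hi)); apply.
have Hne : all (fun s => 0 < size s) (map bedges (b0 :: rep)).
  by rewrite all_map; apply/allP => b /Hok /bundle_okP [].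
have Hconf i j f f' : i <= j < a.+1 -> j < size (b0 :: rep) ->
    f \in nth [::] (map bedges (b0 :: rep)) i ->
    f' \in nth [::] (map bedges (b0 :: rep)) j -> conflict f f'.
  move=> /andP [Hij Hja] Hj Hf Hf'.
  have Hi : i < size (b0 :: rep) by exact: leq_ltn_trans Hij Hj.
  case: (eqVneq i j) Hf' => [<- Hf'|Hneq Hf'].
    exact: conflict_common_head (Hbelow i f Hi Hf) (Hbelow i f' Hi Hf') erefl.
  have [s Hs] : exists s, dpath (nth g0 (g0 :: gs) i) s (tA (nth g0 (g0 :: gs) j)).
    have Hsize : size (b0 :: rep) = (size gs).+1 by rewrite /= size_map.
    by apply: walk_dpath => //; lia.
  by exists (nth g0 (g0 :: gs) i), (nth g0 (g0 :: gs) j), s;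
    split; [exact: Hbelow _ _ Hi Hf | exact: Hbelow _ _ Hj Hf' | left].
move=> /(mem_take_flatten Hne) [i [Hia Hi Hei]].
move=> /(mem_take_flatten Hne) [j [Hja Hj Hej]].
rewrite size_map in Hi Hj.
have [Hij|Hji] := leqP i j.
  by left; apply: (Hconf i j) => //; rewrite Hij Hja.
by right; apply: (Hconf j i) => //; rewrite (ltnW Hji) Hia.
Qed.

Definition large_clique (es : seq E) : Prop :=
  exists L, [/\ uniq L, {subset L <= es}, minn (size es) a.+1 <= size L
              & {in L &, forall e e', linked e e'}].

Lemma large_clique_of_prefix {es L : seq E} : uniq L -> {subset L <= es} ->
  minn (size es) a.+1 <= size L -> {in take a.+1 L &, forall e e', linked e e'} ->
  large_clique es.
Proof.
move=> Huniq Hsub Hsize Hlinked; exists (take a.+1 L); split=> //.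
- exact: take_uniq.
- by move=> e /mem_take /Hsub.
- by rewrite size_take_min leq_min Hsize geq_minr.
Qed.

Definition bundling (es : seq E) (rep : seq bundle) : Prop :=
  [/\ 1 < size rep, uniq (map bstart rep), map bend rep = rot 1 (map bstart rep),
      all bundle_ok rep & perm_eq (flatten (map bedges rep)) es].

Lemma bundling_rot {es rep} n : bundling es rep -> bundling es (rot n rep).
Proof.
case=> Hsize Huniq Hcycle Hok Hperm.
have Hrot (T : eqType) (s : seq T) : perm_eq (rot n s) s by rewrite perm_rot.
split.
- by rewrite size_rot.
- by rewrite map_rot rot_uniq.
- by rewrite !map_rot Hcycle rot_rot.
- by rewrite (perm_all _ (Hrot _ rep)).
- by rewrite map_rot (perm_trans (perm_flatten (Hrot _ _))).
Qed.

(* All arcs forward: they form a directed cycle through u_0, ..., u_{k-1}. *)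
Lemma all_forward_clique {es rep} : uniq es -> bundling es rep -> all forward rep ->
  large_clique es.
Proof.
move=> Hues [_ Hust Hcycle Hok Hperm] /allP Hfw.
have Htails : map tA (map barc rep) = map bstart rep.
  by rewrite -map_comp; apply/eq_in_map => b /Hfw /andP [/eqP].
have Hheads : map hA (map barc rep) = map bend rep.
  by rewrite -map_comp; apply/eq_in_map => b /Hfw /andP [_ /eqP].
apply: (large_clique_of_prefix (L := flatten (map bedges rep))).
- by rewrite (perm_uniq Hperm).
- by move=> e; rewrite (perm_mem Hperm).
- by rewrite (perm_size Hperm) geq_minl.
by apply: directed_cycle_linked; rewrite ?Htails ?Hheads.
Qed.

(* All arcs backward: read in reverse order they form a directed cycle. *)
Lemma all_backward_clique {es rep} : uniq es -> bundling es rep -> all backward rep ->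
  large_clique es.
Proof.
move=> Hues [_ Hust Hcycle Hok Hperm] /allP Hbw.
have Htails : map tA (map barc rep) = map bend rep.
  by rewrite -map_comp; apply/eq_in_map => b /Hbw /andP [/eqP].
have Hheads : map hA (map barc rep) = map bstart rep.
  by rewrite -map_comp; apply/eq_in_map => b /Hbw /andP [_ /eqP].
have Hperm' : perm_eq (flatten (map bedges (rev rep))) es.
  by apply: perm_trans Hperm; apply: perm_flatten; rewrite map_rev perm_rev.
apply: (large_clique_of_prefix (L := flatten (map bedges (rev rep)))).
- by rewrite (perm_uniq Hperm').
- by move=> e; rewrite (perm_mem Hperm').
- by rewrite (perm_size Hperm') geq_minl.
apply: directed_cycle_linked; rewrite ?all_rev //.
- by rewrite !map_rev Htails Hheads Hcycle rev_rot rotrK.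
- by rewrite !map_rev Htails Hcycle rev_uniq rot_uniq.
Qed.

(* A forward arc g0 from u0 to u1 followed by a backward arc g1 from u2 to u1:
   both arcs end at u1, so all edges of the two bundles are linked. *)
Lemma adjacent_bundles_linked {b0 b1} : bundle_ok b0 -> bundle_ok b1 ->
  forward b0 -> backward b1 -> bend b0 = bstart b1 ->
  {in bedges b0 ++ bedges b1 &, forall e e', linked e e'}.
Proof.
move=> /bundle_okP [_ Hbelow0] /bundle_okP [_ Hbelow1].
move=> /andP [_ /eqP Hh0] /andP [_ /eqP Hh1] Hend0.
apply: (common_head_linked (v := bstart b1)) => e; rewrite mem_cat.
case/orP=> He; [exists (barc b0) | exists (barc b1)] => //.
- exact: Hbelow0.
- by rewrite Hh0 Hend0.
- exact: Hbelow1.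
Qed.

(* If kappa(x) is the pair of arcs of two such bundles (in some order), then x
   carries the merged bundle from u0 to u2: it joins them, and its weight
   w(g0) + w(g1) is the number of edges of the two bundles, all below x. *)
Lemma merged_bundle_ok {b0 b1 x} : bundle_ok b0 -> bundle_ok b1 ->
  forward b0 -> backward b1 ->
  kap x = (barc b0, barc b1) \/ kap x = (barc b1, barc b0) ->
  bundle_ok (inr x, bedges b0 ++ bedges b1, bstart b0, bend b1).
Proof.
move=> Hok0 Hok1 /andP [/eqP Ht0 _] /andP [/eqP Ht1 _] Hkx.
have [_ Hbelow0] := bundle_okP Hok0; have [_ Hbelow1] := bundle_okP Hok1.
have /and3P [_ /eqP Hw0 _] := Hok0; have /and3P [_ /eqP Hw1 _] := Hok1.
have [_ Hwx Htx Hhx _] := kap_spec x.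
apply/and3P; split.
- rewrite /forward /backward /barc /bstart /bend /= Htx Hhx.
  by case: Hkx => -> /=; rewrite Ht0 Ht1 !eqxx ?orbT.
- by rewrite /barc /bedges /= Hwx size_cat -Hw0 -Hw1; case: Hkx => -> //=; rewrite addnC.
- apply/allP => e; rewrite mem_cat => /orP [He|He];
    apply: connect_trans (connect1 _); [exact: Hbelow0 | | exact: Hbelow1 |];
    by rewrite /childrel /barc /=; case: Hkx => ->; rewrite eqxx ?orbT.
Qed.

(* A forward bundle followed by a backward one: their edges are pairwise
   linked, which is a large clique if there are only these two bundles or if
   w(g0) + w(g1) > a; otherwise kappa merges them into a single bundle. *)
Lemma merge_step {es b0 b1 rest} : uniq es -> bundling es [:: b0, b1 & rest] ->
  forward b0 -> ~~ forward b1 ->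
  large_clique es \/ exists rep, bundling es rep /\ size rep < (size rest).+2.
Proof.
move=> Hues [_ Hust Hcycle Hok Hperm] Hfw0 Hnfw1.
move: Hok => /= /and3P [Hok0 Hok1 Hokr].
have Hbw1 := bundle_ok_backward Hok1 Hnfw1.
move: Hcycle => /=; rewrite rot1_cons /= => -[Hend0 Hcycle].
set S01 := bedges b0 ++ bedges b1.
have Hperm01 : perm_eq (S01 ++ flatten (map bedges rest)) es by rewrite -catA.
have Hclique01 : minn (size es) a.+1 <= size S01 -> large_clique es.
  exists S01; split=> //.
  - by move: (perm_uniq Hperm01); rewrite Hues cat_uniq => /andP [].
  - by move=> e He; rewrite -(perm_mem Hperm01) mem_cat He.
  - exact: adjacent_bundles_linked.
case: rest Hust Hcycle Hperm Hperm01 Hokr => [|b2 rest] Hust Hcycle Hperm Hperm01 Hokr.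
  by left; apply: Hclique01; rewrite -(perm_size Hperm01) cats0 geq_minl.
have /and3P [_ /eqP Hw0 _] := Hok0; have /and3P [_ /eqP Hw1 _] := Hok1.
case: (ltnP a (wt (barc b0) + wt (barc b1))) => Hw01.
  by left; apply: Hclique01; rewrite size_cat -Hw0 -Hw1 (leq_trans (geq_minr _ _) Hw01).
right; move: Hcycle => [Hend1 Hcycle].
have /andP [/eqP Ht0 /eqP Hh0] := Hfw0; have /andP [/eqP Ht1 /eqP Hh1] := Hbw1.
have Htails : tA (barc b0) != tA (barc b1).
  rewrite Ht0 Ht1 Hend1; move: Hust => /= /andP [].
  by rewrite !inE negb_or => /andP [_ /norP []].
have [x [Hkx _]] := kap_onto _ _ Hw01 Htails (etrans Hh0 (etrans Hend0 (esym Hh1))).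
exists [:: (inr x, S01, bstart b0, bend b1), b2 & rest]; split=> //; split=> //.
- by move: Hust => /= /andP [] /[swap] /andP [] _ ->; rewrite !inE negb_or => /andP [_ ->].
- by rewrite /= rot1_cons /= Hend1 -Hcycle.
- by apply/andP; split=> //; exact: merged_bundle_ok Hok0 Hok1 Hfw0 Hbw1 Hkx.
Qed.

Lemma contraction_step {es rep} : uniq es -> bundling es rep ->
  large_clique es \/ exists rep', bundling es rep' /\ size rep' < size rep.
Proof.
move=> Hues Hbun; have [_ _ _ /allP Hok _] := Hbun.
have [Hfw|/allPn [b0 Hb0 Hnfw0]] := boolP (all forward rep).
  by left; exact: all_forward_clique Hbun Hfw.
have [Hbw|/allPn [b1 Hb1 /negPn Hfw1]] := boolP (all (predC forward) rep).
  left; apply: all_backward_clique Hues Hbun _.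
  by apply/allP => b Hb; apply: bundle_ok_backward (Hok b Hb) (allP Hbw b Hb).
have [n [q Hrot]] : exists n q, rot n (map forward rep) = [:: true, false & q].
  by apply: rot_true_false; [rewrite -Hfw1 | rewrite -(negbTE Hnfw0)]; exact: map_f.
have := bundling_rot n Hbun; rewrite -(size_rot n rep).
move: Hrot; rewrite -map_rot; case: (rot n rep) => [|c0 [|c1 rest]] // [Hc0 Hc1 _].
by move=> Hbun'; apply: merge_step Hues Hbun' _ _; rewrite ?Hc0 ?Hc1.
Qed.

Lemma bundling_large_clique {es rep} : uniq es -> bundling es rep -> large_clique es.
Proof.
move=> Hues; elim: {rep}(size rep).+1 {-2}rep (ltnSn (size rep)) => // n IH rep.
move=> Hsize /(contraction_step Hues) [//|[rep' [Hbun' Hlt]]].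
by apply: (IH rep') => //; lia.
Qed.

Definition edge_bundle (t : E * (V * V)) : bundle := (inl t.1, [:: t.1], t.2.1, t.2.2).

Lemma cycle_bundling {vs es} : is_cycle V E tl hd vs es ->
  bundling es (map edge_bundle (zip es (zip vs (rot 1 vs)))).
Proof.
case=> Hsize Hsizevs Huniq _ Hjoins.
set Z := zip es (zip vs (rot 1 vs)).
have Hsz : size (zip vs (rot 1 vs)) = size es by rewrite size_zip size_rot minnn.
have HZ2 : unzip2 Z = zip vs (rot 1 vs) by rewrite unzip2_zip ?Hsz.
have Hstarts : map bstart (map edge_bundle Z) = vs.
  have -> : map bstart (map edge_bundle Z) = unzip1 (unzip2 Z) by rewrite /unzip1 /unzip2 -!map_comp.
  by rewrite HZ2 unzip1_zip ?size_rot.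
have Hends : map bend (map edge_bundle Z) = rot 1 vs.
  have -> : map bend (map edge_bundle Z) = unzip2 (unzip2 Z) by rewrite /unzip1 /unzip2 -!map_comp.
  by rewrite HZ2 unzip2_zip ?size_rot.
split.
- by rewrite size_map size_zip Hsz minnn.
- by rewrite Hstarts.
- by rewrite Hstarts Hends.
- rewrite all_map; apply: sub_all Hjoins => -[e [u v]] /= Hj.
  by rewrite /bundle_ok /forward /backward /= -/(joins V E tl hd e u v) Hj /preceq connect0.
- have -> : map bedges (map edge_bundle Z) = [seq [:: t.1] | t <- Z] by rewrite -map_comp.
  by rewrite flatten_map1 -/(unzip1 Z) unzip1_zip ?Hsz.
Qed.

Lemma cycle_large_clique vs es : is_cycle V E tl hd vs es -> large_clique es.
Proof.
move=> Hcycle; have [_ _ _ Hues _] := Hcycle.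
exact: bundling_large_clique Hues (cycle_bundling Hcycle).
Qed.

(* A colouring separating conflicting edges is injective on a clique of
   linked edges, so a large clique sees min(|es|, a+1) colours. *)
Lemma large_clique_colours (T : eqType) (c : E -> T) es : large_clique es ->
  (forall e1 e2, e1 != e2 -> conflict e1 e2 -> c e1 != c e2) ->
  minn (size es) a.+1 <= size (undup (map c es)).
Proof.
move=> [L [HuL HsubL HsizeL HlinkL]] Hproper.
have Hinj : {in L &, injective c}.
  move=> e e' He He' Hce; apply/eqP; apply: contraTT (eqxx (c e)) => Hne.
  case: (HlinkL e e' He He') => Hconf; rewrite [X in _ != X]Hce.
  - exact: Hproper Hne Hconf.
  - by rewrite eq_sym; apply: Hproper Hconf; rewrite eq_sym.
apply: (leq_trans HsizeL); rewrite -(size_map c).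
apply: uniq_leq_size; first by rewrite (map_inj_in_uniq Hinj).
by move=> _ /mapP [e He ->]; rewrite mem_undup map_f ?HsubL.
Qed.

End ConflictCliques.

Theorem mainTheorem9
  (V E X : finType) (tl hd : E -> V) (tlX hdX : X -> V) (wX : X -> nat)
  (kap : X -> ((E + X) * (E + X))%type) (a N : nat) (c : E -> 'I_N) :
  (forall e : E, tl e != hd e) ->
  0 < a ->
  @is_fraternal_completion V E X tl hd tlX hdX wX kap a ->
  (forall e1 e2 : E, e1 != e2 ->
     @conflict V E X tl hd tlX hdX kap a e1 e2 -> c e1 != c e2) ->
  forall (vs : seq V) (es : seq E), @is_cycle V E tl hd vs es ->
    minn (size es) a.+1 <= size (undup (map c es)).
Proof.
move=> Hloop Ha [Hweight [Hkap Hconv]] Hproper vs es Hcycle.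
have HwX : forall x, 0 < wX x by move=> x; case/andP: (Hweight x) => /ltnW.
apply: large_clique_colours Hproper.
exact: cycle_large_clique Ha Hloop HwX Hkap Hconv vs es Hcycle.
Qed.
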